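(* Let $G$ be a fullerene graph with a perfect star packing $S$ of type $P0$. Then $G-C(S)$ contains no cycle of odd length that is a non-facial cycle of $G$.
   Context: A fullerene graph is a finite simple connected (equivalently, $3$-connected) plane cubic graph all of whose faces are pentagons or hexagons. A perfect star packing of $G$ is a spanning subgraph $S$ of $G$ every connected component of which is isomorphic to $K_{1,3}$; $C(S)$ denotes the set of centers (degree-$3$ vertices) of the stars in $S$. $S$ is of type $P0$ if no vertex of $C(S)$ lies on a pentagonal face of $G$. A cycle of $G$ is facial if it bounds a face of $G$, non-facial otherwise. *)

(* A plane graph is encoded as a combinatorial map
   (rotation system): darts D, a fixed-point-free edge involution [e],
   a vertex rotation permutation [n] whose orbits are the vertices
   (vertex of a dart given by [vtx : D -> V]); faces are the orbits of
   the face permutation [x |-> n (e x)]; planarity = Euler genus 0. *)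
From mathcomp Require Import all_boot.
Set Implicit Arguments. Unset Strict Implicit. Unset Printing Implicit Defensive.

Section Map.
Variables (V D : finType) (vtx : D -> V) (e n : D -> D).

Definition fperm (x : D) : D := n (e x).

Definition adjG : rel V := fun u v => [exists x, (vtx x == u) && (vtx (e x) == v)].

(* (V, D, vtx, e, n) is a fullerene graph, i.e. a finite simple connected
   plane cubic graph all of whose faces are pentagons or hexagons *)
Definition fullerene : Prop :=
  [/\ (forall x, e (e x) = x), (forall x, e x != x),
      injective n,
      (forall x y, fconnect n x y = (vtx x == vtx y)) & (forall v, exists x, vtx x = v)] /\
  [/\ (forall x, order n x = 3),
      (forall x, vtx (e x) != vtx x),
      (forall x y, vtx x = vtx y -> vtx (e x) = vtx (e y) -> x = y),
      (forall u v, connect adjG u v)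
    & (#|V| + fcard fperm D).*2 = #|D| + 4] /\           (* Euler: V - E + F = 2, planar *)
  (forall x, order fperm x \in [:: 5; 6]).

Definition is_cycle (c : seq V) : bool := [&& 3 <= size c, uniq c & cycle adjG c].

Definition face_seq (x : D) : seq V := map vtx (orbit fperm x).

Definition facial (c : seq V) : Prop :=
  exists x, face_seq x = c \/ face_seq x = rev c.

(* perfect star packing: spanning subgraph s (edge relation) of G every
   connected component of which is isomorphic to K_{1,3} *)
Definition perfect_star_packing (s : rel V) : Prop :=
  [/\ symmetric s, irreflexive s, (forall u v, s u v -> adjG u v)
    & forall v, exists c a b d : V,
        [/\ uniq [:: c; a; b; d],
            [set w | connect s v w] = [set c; a; b; d]
          & forall x y, x \in [set c; a; b; d] -> y \in [set c; a; b; d] ->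
              s x y = ((x == c) && (y \in [set a; b; d])) ||
                      ((y == c) && (x \in [set a; b; d]))]].

Definition centers (s : rel V) : {set V} := [set v | #|[set w | s v w]| == 3].

Definition typeP0 (s : rel V) : Prop :=
  forall x : D, order fperm x = 5 -> forall y, y \in orbit fperm x -> vtx y \notin centers s.

End Map.

From mathcomp Require Import all_boot zify.
Set Implicit Arguments. Unset Strict Implicit. Unset Printing Implicit Defensive.

(* Let [c] be an odd cycle avoiding the centers.  Every vertex of [c] is a leaf
   of a star, so its third edge, which leaves the cycle, leads to its center; the
   rotation at the vertex tells on which side of [c] this spoke lies.  If the side
   never changes, [c] bounds the face on the other side.  Otherwise follow the face
   through the spoke at a change of side: it contains a center, hence is a hexagon
   (type P0), and along a face two centers are never at distance 1 or 2 (centers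
   are not adjacent and share no neighbour).  This determines the sides at the
   next three vertices: a change at step [k] forces the opposite change at step
   [k + 3], and going three times around the odd cycle gives a contradiction. *)

Lemma orbit_traject (T : finType) (f : T -> T) x k :
  0 < k -> iter k f x = x -> uniq (traject f x k) -> orbit f x = traject f x k.
Proof.
case: k => // k _ fk_x uniq_t.
have cycle_t : fcycle f (traject f x k.+1).
  rewrite trajectS /= (_ : rcons _ x = traject f (f x) k.+1) ?fpath_traject //.
  by rewrite trajectSr -iterSr fk_x.
by rewrite /orbit (order_cycle cycle_t uniq_t) ?size_traject // mem_head.
Qed.

Section CubicMap.
Variables (V D : finType) (vtx : D -> V) (e n : D -> D).
Hypothesis eK : involutive e.
Hypothesis n_inj : injective n.
Hypothesis n_vertex : forall x y, fconnect n x y = (vtx x == vtx y).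
Hypothesis n_order3 : forall x, order n x = 3.
Hypothesis simple : forall x y, vtx x = vtx y -> vtx (e x) = vtx (e y) -> x = y.

Local Notation fp := (fperm e n).
Local Notation adj := (adjG vtx e).

Lemma vtx_n x : vtx (n x) = vtx x.
Proof. by apply/esym/eqP; rewrite -n_vertex fconnect1. Qed.

Lemma n3K x : n (n (n x)) = x.
Proof. by have := iter_order n_inj x; rewrite n_order3. Qed.

Lemma orbit_n x : orbit n x = [:: x; n x; n (n x)].
Proof. by rewrite /orbit n_order3. Qed.

Lemma n_neq x : n x != x.
Proof. by have := orbit_uniq n x; rewrite orbit_n /= !inE eq_sym => /andP[/norP[]]. Qed.

Lemma darts_at_vertex x y : vtx y = vtx x -> [\/ y = x, y = n x | y = n (n x)].
Proof.
move=> y_at; have : y \in orbit n x by rewrite -fconnect_orbit n_vertex y_at.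
by rewrite orbit_n !inE => /or3P[] /eqP ->; [constructor 1 | constructor 2 | constructor 3].
Qed.

Lemma fperm_e z : fp (e z) = n z.
Proof. by rewrite /fperm eK. Qed.

Lemma vtx_fperm z : vtx (fp z) = vtx (e z).
Proof. exact: vtx_n. Qed.

Lemma fperm_inj : injective fp.
Proof. by move=> x y /n_inj /(can_inj eK). Qed.

Lemma adjP u w : reflect (exists x, vtx x = u /\ vtx (e x) = w) (adj u w).
Proof.
apply: (iffP existsP) => [[x /andP[/eqP xu /eqP xw]] | [x [xu xw]]]; exists x => //.
by rewrite xu xw !eqxx.
Qed.

Lemma adj_vtx x : adj (vtx x) (vtx (e x)).
Proof. by apply/adjP; exists x. Qed.

Lemma adjC : symmetric adj.
Proof.
by move=> u w; apply/adjP/adjP => -[x [<- <-]]; exists (e x); rewrite eK.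
Qed.

Lemma adj_fperm z : adj (vtx z) (vtx (fp z)).
Proof. by rewrite vtx_fperm adj_vtx. Qed.

Lemma fperm_no_backtrack z : vtx (fp (fp z)) != vtx z.
Proof.
rewrite vtx_fperm; apply/eqP => back_z.
have fp_z : fp z = e z by apply: simple; rewrite ?eK // vtx_fperm.
by have := n_neq (e z); rewrite -[n (e z)]/(fp z) fp_z eqxx.
Qed.

Lemma adj_sub_rotation x :
  {subset adj (vtx x) <= [:: vtx (e x); vtx (e (n x)); vtx (e (n (n x)))]}.
Proof.
move=> w /adjP[y [y_at <-]].
by have [->|->|->] := darts_at_vertex y_at; rewrite !inE eqxx ?orbT.
Qed.

Lemma face_seq_walk z x0 (s0 : seq V) :
    0 < size s0 -> iter (size s0) fp z = z -> uniq s0 ->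
    (forall i, i < size s0 -> vtx (iter i fp z) = nth x0 s0 i) ->
  face_seq vtx e n z = s0.
Proof.
move=> s0_gt0 closed uniq_s0 walk.
have walkE : map vtx (traject fp z (size s0)) = s0.
  apply: (eq_from_nth (x0 := x0)); rewrite size_map size_traject // => i lt_i.
  by rewrite (nth_map z) ?size_traject // nth_traject // walk.
rewrite /face_seq (@orbit_traject _ _ _ (size s0)) ?walkE //.
by apply: (@map_uniq _ _ vtx); rewrite walkE.
Qed.

Section StarPacking.
Variable s : rel V.
Hypothesis star : perfect_star_packing vtx e s.

Local Notation C := (centers s).

Lemma star_adj u w : s u w -> adj u w.
Proof. by case: star => _ _ /(_ u w). Qed.

Lemma star_component v :
  exists2 c, connect s v c &
    forall x, connect s v x -> (x \in C) = (x == c) /\ (x != c -> s x c).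
Proof.
case: star => _ _ _ /(_ v) [c [a [b [d [uniq_K compK starK]]]]].
set L := [set a; b; d] in starK.
have KE : [set c; a; b; d] = c |: L by apply/setP => x; rewrite !inE !orbA.
rewrite KE in compK starK.
have inK x : connect s v x = (x \in c |: L) by rewrite -compK inE.
have c_notin_L : c \notin L by case/andP: uniq_K => + _; rewrite !inE -orbA.
have sE x w : x \in c |: L ->
    s x w = (w \in c |: L) && ((x == c) && (w \in L) || (w == c) && (x \in L)).
  move=> xK; case wK : (w \in c |: L); first exact: starK.
  apply/negbTE/negP => sxw; move: wK; rewrite -!inK in xK *.
  by rewrite (connect_trans xK (connect1 sxw)).
have nbr_c : [set w | s c w] = L.
  apply/setP => w; rewrite inE sE ?setU11 // eqxx (negPf c_notin_L) andbF orbF /=.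
  by rewrite andb_idl // => wL; rewrite in_setU1 wL orbT.
have nbr_leaf x : x \in L -> [set w | s x w] = [set c].
  move=> xL; have x_neq_c : x != c by apply: contraNneq c_notin_L => <-.
  apply/setP => w; rewrite inE in_set1 sE; last by rewrite in_setU1 xL orbT.
  by rewrite (negPf x_neq_c) xL andbT andb_idl // => /eqP->; rewrite setU11.
have card_L : #|L| = 3.
  have uniq_L : uniq [:: a; b; d] by case/andP: uniq_K.
  by rewrite -[3](card_uniqP uniq_L); apply: eq_card => w; rewrite !inE orbA.
exists c; first by rewrite inK setU11.
move=> x; rewrite inK in_setU1 => /orP[/eqP->|xL]; first by rewrite eqxx inE nbr_c card_L.
have x_neq_c : x != c by apply: contraNneq c_notin_L => <-.
rewrite inE nbr_leaf // cards1 (negPf x_neq_c); split=> // _.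
by rewrite sE ?in_setU1 ?xL ?eqxx ?orbT.
Qed.

Lemma noncenter_leaf v : v \notin C -> exists2 c, c \in C & s v c.
Proof.
move=> vNC; have [c vc starv] := star_component v.
have [vCE leaf_v] := starv v (connect0 s v).
exists c; first by have [-> _] := starv c vc; rewrite eqxx.
by apply: leaf_v; rewrite -vCE.
Qed.

Lemma center_leaves c w : c \in C -> s c w -> w \notin C.
Proof.
move=> cC scw; have [c' _ starc] := star_component c.
have [cCE _] := starc c (connect0 s c).
have [-> _] := starc w (connect1 scw).
move: cCE; rewrite cC => /esym/eqP <-.
by apply: contraTneq scw => ->; case: star => _ irr _ _; rewrite irr.
Qed.

Lemma leaf_center_uniq y c1 c2 : c1 \in C -> c2 \in C -> s c1 y -> s c2 y -> c1 = c2.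
Proof.
move=> c1C c2C sc1 sc2; have [c _ stary] := star_component y.
case: star => s_sym _ _ _.
have [c1E _] := stary c1 (connect1 (etrans (s_sym _ _) sc1)).
have [c2E _] := stary c2 (connect1 (etrans (s_sym _ _) sc2)).
by move: c1E c2E; rewrite c1C c2C => /esym/eqP-> /esym/eqP->.
Qed.

(* A center has three star neighbours and a cubic vertex has at most three neighbours. *)
Lemma center_adj_star c w : c \in C -> adj c w -> s c w.
Proof.
rewrite inE => /eqP card3 cw.
have /set0Pn[a] : [set w | s c w] != set0 by rewrite -card_gt0 card3.
rewrite inE => /star_adj/adjP[x [xc _]].
set nbrs := [:: vtx (e x); vtx (e (n x)); vtx (e (n (n x)))].
have sub : [set w | s c w] \subset nbrs.
  by apply/subsetP => u; rewrite inE -xc => /star_adj/adj_sub_rotation.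
have card_nbrs : #|[set w | s c w]| = #|nbrs|.
  by apply/eqP; rewrite eqn_leq subset_leq_card // card3 (card_size nbrs).
have /(subset_cardP card_nbrs) same := sub.
by have := same w; rewrite in_set => ->; apply: adj_sub_rotation; rewrite xc.
Qed.

Lemma centers_not_adjacent u w : u \in C -> adj u w -> w \notin C.
Proof. by move=> uC /(center_adj_star uC); apply: center_leaves. Qed.

Lemma centers_no_common_neighbor u1 u2 w :
  u1 \in C -> u2 \in C -> adj u1 w -> adj u2 w -> u1 = u2.
Proof.
move=> u1C u2C /(center_adj_star u1C) s1 /(center_adj_star u2C) s2.
exact: leaf_center_uniq s1 s2.
Qed.

Section TypeP0.
Hypothesis face_size : forall x, order fp x \in [:: 5; 6].
Hypothesis P0 : typeP0 vtx e n s.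

Lemma face_hexagon k z : vtx (iter k fp z) \in C -> iter 6 fp z = z.
Proof.
move=> zC; have := face_size z; rewrite !inE => /orP[/eqP pentagon | /eqP <-].
  by have := P0 pentagon (y := iter k fp z); rewrite -fconnect_orbit fconnect_iter zC => /(_ isT).
exact: iter_order fperm_inj z.
Qed.

Lemma noncenter_near_center z k :
  vtx z \in C -> k \in [:: 1; 2; 4; 5] -> vtx (iter k fp z) \notin C.
Proof.
move=> zC; have hex : iter 6 fp z = z := face_hexagon (k := 0) zC.
have near1 y : vtx y \in C -> vtx (fp y) \notin C.
  by move=> yC; apply: centers_not_adjacent yC (adj_fperm y).
have near2 y : vtx y \in C -> vtx (fp (fp y)) \notin C.
  move=> yC; apply: contra (fperm_no_backtrack y) => yyC; apply/eqP.
  by apply: centers_no_common_neighbor yyC yC _ (adj_fperm y); rewrite adjC adj_fperm.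
rewrite ![k \in _]inE => /or4P[] /eqP->; [exact: near1 | exact: near2 | |].
(* On the hexagon, distances 4 and 5 from [z] are distances 2 and 1 back to [z]. *)
- by apply: (contraL _ zC) => yC; have := near2 _ yC; rewrite -[fp (fp _)]/(iter 6 fp z) hex.
- by apply: (contraL _ zC) => yC; have := near1 _ yC; rewrite -[fp _]/(iter 6 fp z) hex.
Qed.

Section OddCycle.
Variables (x0 : V) (p : seq V).
Local Notation c := (x0 :: p).
Local Notation m := (size c).
Hypothesis c_size : 3 <= m.
Hypothesis c_uniq : uniq c.
Hypothesis c_cycle : cycle adj c.
Hypothesis c_noncenter : all (fun v => v \notin C) c.

Definition cyc i := nth x0 c (i %% m).

Lemma cycDm i : cyc (i + m) = cyc i.
Proof. by rewrite /cyc modnDr. Qed.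

Lemma cyc_in i : cyc i \in c.
Proof. by rewrite mem_nth ?ltn_pmod. Qed.

Lemma cyc_next i : next c (cyc i) = cyc i.+1.
Proof.
rewrite next_nth cyc_in index_uniq ?ltn_pmod // /cyc -addn1 -modnDml addn1.
have := ltn_pmod i (ltn0Sn (size p)); rewrite leq_eqVlt => /orP[/eqP [im] | lt_im].
  by rewrite im modnn nth_default.
by rewrite (modn_small lt_im).
Qed.

Lemma adj_cyc i : adj (cyc i) (cyc i.+1).
Proof. by rewrite -cyc_next; apply: next_cycle c_cycle (cyc_in i). Qed.

Lemma cyc_noncenter i : cyc i \notin C.
Proof. exact: (allP c_noncenter _ (cyc_in i)). Qed.

Lemma cyc_neq2 i : cyc i.+2 != cyc i.
Proof.
rewrite /cyc nth_uniq ?ltn_pmod // -addn2 -{2}[i]addn0 eqn_modDl.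
by rewrite mod0n modn_small // (leq_trans _ c_size).
Qed.

Definition out i := xchoose (existsP (adj_cyc i)).
Definition back i := e (out i).

Lemma vtx_out i : vtx (out i) = cyc i.
Proof. by have /andP[/eqP] := xchooseP (existsP (adj_cyc i)). Qed.

Lemma vtx_back i : vtx (back i) = cyc i.+1.
Proof. by have /andP[_ /eqP] := xchooseP (existsP (adj_cyc i)). Qed.

Lemma vtx_e_back i : vtx (e (back i)) = cyc i.
Proof. by rewrite /back eK vtx_out. Qed.

Lemma outDm i : out (i + m) = out i.
Proof. by apply: simple; rewrite -/(back _) ?vtx_out ?vtx_back ?cycDm // -addSn cycDm. Qed.

Lemma backDm i : back (i + m) = back i.
Proof. by rewrite /back outDm. Qed.

Lemma back_neq_out i : back i != out i.+1.
Proof.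
by apply/eqP => E; have := cyc_neq2 i; rewrite -(vtx_e_back i) E -/(back _) vtx_back eqxx.
Qed.

(* At the vertex [cyc i.+1] the cycle arrives through [back i] and leaves through
   [out i.+1]; [spoke i] is the third dart there, and [turn i] tells on which
   side of the cycle it lies. *)
Definition turn i := n (back i) == out i.+1.
Definition spoke i := if turn i then n (out i.+1) else n (back i).

Variant turn_spec i : bool -> Prop :=
  | Turn of n (back i) = out i.+1 & n (out i.+1) = spoke i & n (spoke i) = back i :
      turn_spec i true
  | NoTurn of n (back i) = spoke i & n (spoke i) = out i.+1 & n (out i.+1) = back i :
      turn_spec i false.

Lemma turnP i : turn_spec i (turn i).
Proof.
have spokeE : spoke i = if turn i then n (out i.+1) else n (back i) by [].
case: (boolP (turn i)) spokeE => [t | nt] /= spokeE.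
  by move/eqP: t => t; constructor; rewrite ?spokeE -?t ?n3K.
have out_at : vtx (out i.+1) = vtx (back i) by rewrite vtx_out vtx_back.
have [E|E|E] := darts_at_vertex out_at.
- by have := back_neq_out i; rewrite E eqxx.
- by move: nt; rewrite /turn E eqxx.
- by constructor; rewrite ?spokeE ?E ?n3K.
Qed.

Lemma face_turn i :
  turn i -> [/\ fp (out i) = out i.+1, fp (back i.+1) = spoke i & fp (e (spoke i)) = back i].
Proof. by case: (turnP i) => // h1 h2 h3 _; rewrite !fperm_e. Qed.

Lemma face_noturn i :
  ~~ turn i -> [/\ fp (out i) = spoke i, fp (e (spoke i)) = out i.+1 & fp (back i.+1) = back i].
Proof. by case: (turnP i) => // h1 h2 h3 _; rewrite !fperm_e. Qed.

Lemma darts_at_cyc i y : vtx y = cyc i.+1 -> y \in [:: back i; out i.+1; spoke i].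
Proof.
rewrite -(vtx_back i) => /darts_at_vertex.
by case: (turnP i) => h1 h2 _ [->|->|->]; rewrite ?h1 ?h2 !inE eqxx ?orbT.
Qed.

Lemma spoke_center i : vtx (e (spoke i)) \in C.
Proof.
have [c0 c0C leaf] := noncenter_leaf (cyc_noncenter i.+1).
have /adjP[y [y_at y_to]] := star_adj leaf.
have := darts_at_cyc y_at; rewrite ![y \in _]inE => /or3P[] /eqP y_eq; move: c0C.
- by rewrite -y_to y_eq vtx_e_back (negPf (cyc_noncenter i)).
- by rewrite -y_to y_eq -/(back _) vtx_back (negPf (cyc_noncenter _)).
- by rewrite -y_to y_eq.
Qed.

Lemma switch_off_on i : ~~ turn i -> turn i.+1 -> [&& turn i.+2, turn i.+3 & ~~ turn i.+4].
Proof.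
move=> /face_noturn[_ w1 _] /face_turn[w2 _ _].
have near k := @noncenter_near_center _ k (spoke_center i).
case: (boolP (turn i.+2)) => [/face_turn[w3 _ _] | /face_noturn[w3 _ _]]; last first.
  by have := near 4 isT; rewrite [iter _ _ _]/= w1 w2 w3 vtx_fperm spoke_center.
case: (boolP (turn i.+3)) => [/face_turn[w4 _ _] | /face_noturn[w4 _ _]]; last first.
  by have := near 5 isT; rewrite [iter _ _ _]/= w1 w2 w3 w4 vtx_fperm spoke_center.
case: (boolP (turn i.+4)) => [/face_turn[w5 _ _] | //].
have hex := face_hexagon (k := 0) (spoke_center i).
have := spoke_center i; rewrite -[e (spoke i)]hex [iter _ _ _]/= w1 w2 w3 w4 w5.
by rewrite vtx_fperm -/(back _) vtx_back (negPf (cyc_noncenter _)).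
Qed.

Lemma switch_on_off i : turn i -> ~~ turn i.+1 -> [&& ~~ turn i.+2, ~~ turn i.+3 & turn i.+4].
Proof.
move=> /face_turn[_ v1 _] /face_noturn[_ _ v2].
case: (boolP (turn i.+2)) => [/face_turn[_ _ u] | /face_noturn[_ _ v3]].
  have := noncenter_near_center (k := 4) (spoke_center i.+2) isT.
  by rewrite [iter _ _ _]/= u v2 v1 vtx_fperm spoke_center.
case: (boolP (turn i.+3)) => [/face_turn[_ _ u] | /face_noturn[_ _ v4]].
  have := noncenter_near_center (k := 5) (spoke_center i.+3) isT.
  by rewrite [iter _ _ _]/= u v3 v2 v1 vtx_fperm spoke_center.
case: (boolP (turn i.+4)) => [// | /face_noturn[_ _ v5]].
have := face_hexagon (k := 6) (z := back i.+4.+1).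
rewrite [iter _ _ _]/= v5 v4 v3 v2 v1 vtx_fperm spoke_center => /(_ isT) hex.
by have := spoke_center i; rewrite -vtx_fperm hex vtx_back (negPf (cyc_noncenter _)).
Qed.

Lemma turn_switch k : turn k != turn k.+1 -> turn k.+3 = ~~ turn k /\ turn k.+3 != turn k.+4.
Proof.
case t0 : (turn k); case t1 : (turn k.+1) => // _.
  by have /and3P[_ /negPf-> ->] := switch_on_off t0 (negbT t1).
by have /and3P[_ -> /negPf->] := switch_off_on (negbT t0) t1.
Qed.

Lemma turnDm i : turn (i + m) = turn i.
Proof. by rewrite /turn backDm -addSn outDm. Qed.

Lemma turn_const i : odd m -> turn i.+1 = turn i.
Proof.
move=> m_odd; case: (eqVneq (turn i) (turn i.+1)) => [-> // | switch]; exfalso.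
have switch_iter q :
    turn (i + 3 * q) = turn i (+) odd q /\ turn (i + 3 * q) != turn (i + 3 * q).+1.
  elim: q => [|q [IH1 IH2]]; first by rewrite muln0 addn0 addbF.
  have -> : i + 3 * q.+1 = (i + 3 * q).+3 by rewrite mulnS; lia.
  have [flip3 next_switch] := turn_switch IH2.
  by split=> //; rewrite flip3 IH1 /= addbN.
have [flip _] := switch_iter m.
have : turn (i + 3 * m) = turn i by rewrite (_ : i + 3 * m = i + m + m + m) ?turnDm //; lia.
by rewrite flip m_odd addbT; case: (turn i).
Qed.

Lemma odd_cycle_facial : odd m -> facial vtx e n c.
Proof.
move=> m_odd; have turnE i : turn i = turn 0 by elim: i => // i IH; rewrite turn_const.
case: (boolP (turn 0)) => [t0 | nt0].
- have walk k : iter k fp (out 0) = out k.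
    elim: k => // k IH; have tk : turn k by rewrite turnE.
    by have [step _ _] := face_turn tk; rewrite iterS IH step.
  exists (out 0); left; apply: (face_seq_walk (x0 := x0)) => //.
    by rewrite walk -[out m]/(out (0 + m)) outDm.
  by move=> i lt_im; rewrite walk vtx_out /cyc modn_small.
- have walk k j : iter k fp (back (j + k)) = back j.
    elim: k j => [|k IH] j; first by rewrite addn0.
    have ntk : ~~ turn (j + k) by rewrite turnE.
    have [_ _ step] := face_noturn ntk.
    by rewrite iterSr addnS step IH.
  exists (back (m.-2 + m)); right; apply: (face_seq_walk (x0 := x0)).
  + by rewrite size_rev.
  + by rewrite size_rev walk backDm.
  + by rewrite rev_uniq.
  + move=> i; rewrite size_rev => lt_im.
    rewrite (_ : m.-2 + m = (m.-2 + m - i) + i); last by lia.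
    rewrite walk vtx_back nth_rev // /cyc.
    by rewrite (_ : (m.-2 + m - i).+1 = m - i.+1 + m) ?modnDr ?modn_small //; lia.
Qed.

End OddCycle.
End TypeP0.
End StarPacking.
End CubicMap.

Theorem mainTheorem13 (V D : finType) (vtx : D -> V) (e n : D -> D) (s : rel V) :
  fullerene vtx e n ->
  perfect_star_packing vtx e s ->
  typeP0 vtx e n s ->
  forall c : seq V,
    is_cycle vtx e c ->
    all (fun v => v \notin centers s) c ->
    odd (size c) ->
    facial vtx e n c.
Proof.
move=> [[eK _ n_inj n_vertex _] [[n_order3 _ simple _ _] face_size]] star P0.
case=> [|x0 p] // /and3P[c_size c_uniq c_cycle] c_noncenter m_odd.
exact: (odd_cycle_facial eK n_inj n_vertex n_order3 simple star face_size P0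
          c_size c_uniq c_cycle c_noncenter m_odd).
Qed.
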